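(* Let the type set be a disjoint union $\{1,\dots,V\}=\bigcup_\alpha V_\alpha$ of isomer classes, with internal energies $I_v$, parameters $\nu_v>0$ constant on each class $V_\alpha$, and $\beta>0$. Let $p_v>0$ and assume: (i) binary reaction base rates $b_{\hat\imath\hat\jmath}$, $\hat\imath=(v,w)$, $\hat\jmath=(v',w')$, satisfy $p_vp_wb_{\hat\imath\hat\jmath}=p_{v'}p_{w'}b_{\hat\jmath\hat\imath}$; (ii) unary reaction base rates $b_{vw}$, allowed only for $v,w$ in the same class, satisfy $p_vb_{vw}=p_wb_{wv}$; (iii) for every binary reaction $v,w\to v',w'$, $\nu_v+\nu_w=\nu_{v'}+\nu_{w'}$. With $f_v$, $f_{\hat\imath}$, $a_{vw}(U)$, $a_{\hat\imath\hat\jmath}(U)$ as in the context, set $$\pi_v=p_ve^{-\beta I_v}\beta^{-\nu_v}.$$ Then for every binary reaction $\hat\imath\to\hat\jmath$ and all $U>\max(I_{\hat\imath},I_{\hat\jmath})$, $$\pi_v\pi_wf_{\hat\imath}(U)a_{\hat\imath\hat\jmath}(U)=\pi_{v'}\pi_{w'}f_{\hat\jmath}(U)a_{\hat\jmath\hat\imath}(U),$$ and for every unary reaction $v\to w$ within a class and all $U>\max(I_v,I_w)$, $$\pi_vf_v(U)a_{vw}(U)=\pi_wf_w(U)a_{wv}(U).$$ That is, the factorized distribution with type weights $\pi_v$ and type-$v$ full-energy densities $f_v$ is a reversible invariant distribution for both binary and unary reactions.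
   Context: For a type $v$, $f_v$ is the shifted Gamma density $f_v(U)=\frac{\beta^{\nu_v}}{\Gamma(\nu_v)}(U-I_v)^{\nu_v-1}e^{-\beta(U-I_v)}$ for $U>I_v$ and $0$ otherwise ($U$ = full energy = internal plus kinetic). For a pair $\hat\imath=(v,w)$, $I_{\hat\imath}=I_v+I_w$, $\nu_{\hat\imath}=\nu_v+\nu_w$, and $f_{\hat\imath}=f_v*f_w$ (convolution), the density of the pair's total full energy. Unary rates: $a_{vw}(U)=(U-I_w)^{\nu_w-1}b_{vw}$ if $U\ge I_w$, $0$ otherwise, where $U$ is the full energy of the molecule, which is conserved in the reaction. Binary rates: $a_{\hat\imath\hat\jmath}(U)=(U-I_{\hat\jmath})^{\nu_{\hat\jmath}-1}b_{\hat\imath\hat\jmath}$ if $U\ge I_{\hat\jmath}$, $0$ otherwise, where $U$ is the total full energy of the reacting pair, which is conserved in the reaction. *)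

From Stdlib Require Import Reals Lra ClassicalEpsilon.
Open Scope R_scope.

Definition improper_int (g : R -> R) (lo hi l : R) : Prop :=
  forall eps, 0 < eps -> exists delta, 0 < delta /\
    forall a b, lo < a < lo + delta -> hi - delta < b < hi ->
      exists pr : Riemann_integrable g a b, Rabs (RiemannInt pr - l) < eps.

Definition improper_int_inf (g : R -> R) (lo l : R) : Prop :=
  forall eps, 0 < eps -> exists delta, 0 < delta /\ exists M,
    forall a b, lo < a < lo + delta -> M < b ->
      exists pr : Riemann_integrable g a b, Rabs (RiemannInt pr - l) < eps.

Definition Rint_open (g : R -> R) (lo hi : R) : R :=
  epsilon (inhabits 0) (improper_int g lo hi).

Definition Gamma_fn (nu : R) : R :=
  epsilon (inhabits 0)
    (improper_int_inf (fun t => Rpower t (nu - 1) * exp (- t)) 0).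

Definition gamma_dens (beta nu I0 U : R) : R :=
  if Rlt_dec I0 U then
    Rpower beta nu / Gamma_fn nu * Rpower (U - I0) (nu - 1) * exp (- beta * (U - I0))
  else 0.

Section Model.
Context {T : Type} (beta : R) (I nu : T -> R).

Definition f_type (v : T) (U : R) : R := gamma_dens beta (nu v) (I v) U.

Definition I_pair (i : T * T) : R := I (fst i) + I (snd i).
Definition nu_pair (i : T * T) : R := nu (fst i) + nu (snd i).

(* f_ihat = f_v * f_w (convolution).  The integrand t |-> f_v(t) f_w(U-t)
   vanishes outside (I_v, U - I_w), so the convolution is the (improper, as
   the integrand may be unbounded at the endpoints when nu < 1) integral over
   that interval, and 0 when U <= I_v + I_w. *)
Definition f_pair (i : T * T) (U : R) : R :=
  if Rlt_dec (I_pair i) U then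
    Rint_open (fun t => f_type (fst i) t * f_type (snd i) (U - t))
              (I (fst i)) (U - I (snd i))
  else 0.

Definition a_un (b : T -> T -> R) (v w : T) (U : R) : R :=
  if Rle_dec (I w) U then Rpower (U - I w) (nu w - 1) * b v w else 0.

Definition a_bin (b : T * T -> T * T -> R) (i j : T * T) (U : R) : R :=
  if Rle_dec (I_pair j) U then Rpower (U - I_pair j) (nu_pair j - 1) * b i j else 0.

End Model.

Definition pi_w {T : Type} (beta : R) (I nu p : T -> R) (v : T) : R :=
  p v * exp (- beta * I v) * Rpower beta (- nu v).

From Stdlib Require Import Reals.
From Stdlib Require Fin.
From Stdlib Require Import Lra ClassicalEpsilon Classical.
From Coquelicot Require Import Coquelicot.
Open Scope R_scope.

(* Multiplying the type weight [pi_v = p_v e^(-beta I_v) beta^(-nu_v)] by the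
   shifted Gamma density [f_v(U)] leaves [p_v e^(-beta U) (U - I_v)^(nu_v - 1)
   / Gamma(nu_v)]; the rate [a_vw(U)] contributes [(U - I_w)^(nu_w - 1) b_vw].
   Both unary and binary balance equations then reduce to the hypotheses on
   the base rates, PROVIDED that the pair density [f_(v,w) = f_v * f_w] is the
   shifted Gamma density of shape [nu_v + nu_w] and shift [I_v + I_w], so that
   it depends on the pair only through these sums.  That convolution identity
   is the analytic heart of the proof: after the substitution
   [s = (t - I_v) / (U - I_v - I_w)] it is the Beta-Gamma identity
   [B(a, b) Gamma(a + b) = Gamma(a) Gamma(b)]. *)

Lemma RInt_scale (g : R -> R) a b c : ex_RInt g a b ->
  RInt (fun x => c * g x) a b = c * RInt g a b.
Proof. intros Hg. exact (RInt_scal (V:=R_CompleteNormedModule) g a b c Hg). Qed.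

Lemma ex_RInt_lincomb (g h : R -> R) a b c d : ex_RInt g a b -> ex_RInt h a b ->
  ex_RInt (fun x => c * g x + d * h x) a b.
Proof.
  intros Hg Hh.
  exact (ex_RInt_plus (V:=R_NormedModule) (fun x => scal c (g x)) (fun x => scal d (h x)) a b
     (ex_RInt_scal _ _ _ _ Hg) (ex_RInt_scal _ _ _ _ Hh)).
Qed.

Lemma RInt_lincomb (g h : R -> R) a b c d : ex_RInt g a b -> ex_RInt h a b ->
  RInt (fun x => c * g x + d * h x) a b = c * RInt g a b + d * RInt h a b.
Proof.
  intros Hg Hh.
  assert (E := RInt_plus (V:=R_CompleteNormedModule) (fun x => scal c (g x))
    (fun x => scal d (h x)) a b (ex_RInt_scal _ _ _ _ Hg) (ex_RInt_scal _ _ _ _ Hh)).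
  rewrite (RInt_scal (V:=R_CompleteNormedModule) g), (RInt_scal (V:=R_CompleteNormedModule) h)
    in E by auto.
  exact E.
Qed.

Lemma RInt_split (g : R -> R) a b c : ex_RInt g a b -> ex_RInt g b c ->
  RInt g a c = RInt g a b + RInt g b c.
Proof. intros Hab Hbc. symmetry; exact (RInt_Chasles (V:=R_CompleteNormedModule) g a b c Hab Hbc). Qed.

Lemma RInt_antiderivative (f F : R -> R) a b : a <= b ->
  (forall x, a <= x <= b -> is_derive F x (f x)) ->
  (forall x, a <= x <= b -> continuous f x) -> RInt f a b = F b - F a.
Proof.
  intros Hab Hd Hc.
  apply (is_RInt_unique (V:=R_CompleteNormedModule)).
  apply (is_RInt_derive (V:=R_CompleteNormedModule)); intros x Hx;
    [apply Hd | apply Hc]; rewrite Rmin_left, Rmax_right in Hx; lra.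
Qed.

Lemma derivable_continuous (f : R -> R) x : ex_derive f x -> continuous f x.
Proof. intros H. exact (ex_derive_continuous (K:=R_AbsRing) (V:=R_NormedModule) f x H). Qed.

(** * Improper integrals over an open interval [(lo, hi)], [hi] possibly [+oo] *)

Definition in_ivl (lo : R) (hi : Rbar) (x : R) : Prop := lo < x /\ Rbar_lt x hi.
Definition cont_on (g : R -> R) (lo : R) (hi : Rbar) : Prop :=
  forall x, in_ivl lo hi x -> continuous g x.
Definition nonneg_on (g : R -> R) (lo : R) (hi : Rbar) : Prop :=
  forall x, in_ivl lo hi x -> 0 <= g x.

Definition is_imp_int (g : R -> R) (lo : R) (hi : Rbar) (l : R) : Prop :=
  forall eps, 0 < eps -> exists a0 b0,
    in_ivl lo hi a0 /\ in_ivl lo hi b0 /\ a0 <= b0 /\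
    forall a b, lo < a <= a0 -> b0 <= b -> Rbar_lt b hi -> Rabs (RInt g a b - l) < eps.

Lemma Rbar_lt_le_trans (x y : R) (hi : Rbar) : x <= y -> Rbar_lt y hi -> Rbar_lt x hi.
Proof. destruct hi; simpl; intros; auto; lra. Qed.

Lemma in_ivl_between lo hi a b x :
  in_ivl lo hi a -> in_ivl lo hi b -> a <= x <= b -> in_ivl lo hi x.
Proof.
  intros [Ha1 Ha2] [Hb1 Hb2] Hx. split; [lra|].
  apply Rbar_lt_le_trans with b; auto; lra.
Qed.

Lemma in_ivl_nonempty (lo : R) (hi : Rbar) : Rbar_lt lo hi -> exists x, in_ivl lo hi x.
Proof.
  destruct hi as [h| |]; simpl; intros H; try contradiction.
  - exists ((lo + h) / 2). split; simpl; lra.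
  - exists (lo + 1). split; simpl; [lra | exact I].
Qed.

Lemma in_ivl_min lo hi a b : in_ivl lo hi a -> in_ivl lo hi b -> in_ivl lo hi (Rmin a b).
Proof. unfold Rmin; destruct (Rle_dec a b); auto. Qed.

Lemma in_ivl_max lo hi a b : in_ivl lo hi a -> in_ivl lo hi b -> in_ivl lo hi (Rmax a b).
Proof. unfold Rmax; destruct (Rle_dec a b); auto. Qed.

Lemma cont_on_ex_RInt g lo hi a b :
  cont_on g lo hi -> in_ivl lo hi a -> in_ivl lo hi b -> ex_RInt g a b.
Proof.
  intros Hc Ha Hb. apply (ex_RInt_continuous (V:=R_CompleteNormedModule)).
  intros z Hz. apply Hc. unfold Rmin, Rmax in Hz. destruct (Rle_dec a b).
  - apply in_ivl_between with a b; auto.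
  - apply in_ivl_between with b a; auto; lra.
Qed.

Lemma cont_on_ext (f g : R -> R) (lo : R) (hi : Rbar) :
  (forall y, in_ivl lo hi y -> g y = f y) -> cont_on g lo hi -> cont_on f lo hi.
Proof.
  intros He Hc x Hx. apply continuous_ext_loc with g; [|apply Hc; auto].
  apply locally_interval with lo hi; try apply Hx.
  intros y H1 H2. apply He. split; auto.
Qed.

Lemma RInt_nonneg_mono g lo hi a' a b b' : cont_on g lo hi -> nonneg_on g lo hi ->
  in_ivl lo hi a' -> in_ivl lo hi b' -> a' <= a -> a <= b -> b <= b' ->
  RInt g a b <= RInt g a' b'.
Proof.
  intros Hc Hp Ha' Hb' H1 H2 H3.
  assert (Ha : in_ivl lo hi a) by (apply in_ivl_between with a' b'; auto; lra).
  assert (Hb : in_ivl lo hi b) by (apply in_ivl_between with a' b'; auto; lra).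
  assert (Hnn : forall c d, a' <= c <= d -> d <= b' -> 0 <= RInt g c d).
  { intros c d Hcd Hd. apply RInt_ge_0; [lra | |].
    - apply cont_on_ex_RInt with lo hi; auto;
        apply in_ivl_between with a' b'; auto; lra.
    - intros; apply Hp; apply in_ivl_between with a' b'; auto; lra. }
  rewrite (RInt_split g a' a b'), (RInt_split g a b b');
    try (apply cont_on_ex_RInt with lo hi; auto).
  pose proof (Hnn a' a ltac:(lra) ltac:(lra)). pose proof (Hnn b b' ltac:(lra) ltac:(lra)).
  lra.
Qed.

Lemma imp_int_ge g lo hi l a b : cont_on g lo hi -> nonneg_on g lo hi ->
  is_imp_int g lo hi l -> in_ivl lo hi a -> in_ivl lo hi b -> a <= b -> RInt g a b <= l.
Proof.
  intros Hc Hp Hl Ha Hb Hab.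
  destruct (Rle_dec (RInt g a b) l) as [|Hn]; auto. exfalso.
  destruct (Hl (RInt g a b - l)) as [a0 [b0 [Ha0 [Hb0 [Hab0 H]]]]]; [lra|].
  pose proof (Rmin_l a a0); pose proof (Rmin_r a a0).
  pose proof (Rmax_l b b0); pose proof (Rmax_r b b0).
  assert (Hm : RInt g a b <= RInt g (Rmin a a0) (Rmax b b0)).
  { apply RInt_nonneg_mono with lo hi; auto using in_ivl_min, in_ivl_max. }
  assert (Hclose : Rabs (RInt g (Rmin a a0) (Rmax b b0) - l) < RInt g a b - l).
  { destruct (in_ivl_min lo hi a a0 Ha Ha0), (in_ivl_max lo hi b b0 Hb Hb0).
    apply H; auto; lra. }
  apply Rabs_def2 in Hclose. lra.
Qed.

Lemma imp_int_le g lo hi l K : is_imp_int g lo hi l ->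
  (forall a b, in_ivl lo hi a -> in_ivl lo hi b -> a <= b -> RInt g a b <= K) -> l <= K.
Proof.
  intros Hl HK. destruct (Rle_dec l K) as [|Hn]; auto. exfalso.
  destruct (Hl (l - K)) as [a0 [b0 [Ha0 [Hb0 [Hab0 H]]]]]; [lra|].
  assert (Hclose : Rabs (RInt g a0 b0 - l) < l - K).
  { apply H; [split; [apply Ha0 | lra] | lra | apply Hb0]. }
  apply Rabs_def2 in Hclose. specialize (HK a0 b0 Ha0 Hb0 Hab0). lra.
Qed.

(* Monotone convergence: a nonnegative continuous function whose proper
   integrals are bounded has an improper integral (their supremum). *)
Lemma imp_int_of_bounded g (lo : R) (hi : Rbar) K : Rbar_lt lo hi ->
  cont_on g lo hi -> nonneg_on g lo hi ->
  (forall a b, in_ivl lo hi a -> in_ivl lo hi b -> a <= b -> RInt g a b <= K) ->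
  exists l, is_imp_int g lo hi l.
Proof.
  intros Hlh Hc Hp HK.
  set (E := fun r => exists a b, in_ivl lo hi a /\ in_ivl lo hi b /\ a <= b /\ r = RInt g a b).
  assert (Hbnd : bound E) by (exists K; intros r [a [b [Ha [Hb [Hab ->]]]]]; auto).
  assert (Hne : exists r, E r).
  { destruct (in_ivl_nonempty lo hi Hlh) as [x Hx]. exists (RInt g x x), x, x.
    exact (conj Hx (conj Hx (conj (Rle_refl x) eq_refl))). }
  destruct (completeness E Hbnd Hne) as [m [Hub Hlub]].
  exists m. intros eps Heps.
  assert (Hclose : exists r, E r /\ m - eps < r).
  { apply NNPP. intro Hn. assert (m <= m - eps); [|lra]. apply Hlub. intros r Hr.
    destruct (Rle_dec r (m - eps)); auto. exfalso. apply Hn. exists r. split; auto; lra. }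
  destruct Hclose as [r [[a0 [b0 [Ha0 [Hb0 [Hab0 ->]]]]] Hr]].
  exists a0, b0. refine (conj Ha0 (conj Hb0 (conj Hab0 _))).
  intros a b Ha Hb Hbh.
  assert (Hia : in_ivl lo hi a)
    by (split; [lra | apply Rbar_lt_le_trans with a0; [lra | apply Ha0]]).
  assert (Hib : in_ivl lo hi b) by (split; auto; destruct Ha0; lra).
  assert (RInt g a0 b0 <= RInt g a b) by (apply RInt_nonneg_mono with lo hi; auto; lra).
  assert (RInt g a b <= m).
  { apply Hub. exists a, b. refine (conj Hia (conj Hib (conj _ eq_refl))). lra. }
  apply Rabs_def1; lra.
Qed.

Lemma imp_int_ext g h (lo : R) (hi : Rbar) l : (forall x, in_ivl lo hi x -> g x = h x) ->
  is_imp_int g lo hi l -> is_imp_int h lo hi l.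
Proof.
  intros He Hl eps Heps. destruct (Hl eps Heps) as [a0 [b0 [Ha0 [Hb0 [Hab H]]]]].
  exists a0, b0. refine (conj Ha0 (conj Hb0 (conj Hab _))).
  intros a b Ha Hb Hbh. rewrite <- (RInt_ext g); [apply H; auto |].
  intros x Hx. apply He. rewrite Rmin_left, Rmax_right in Hx by lra.
  split; [lra | apply Rbar_lt_le_trans with b; auto; lra].
Qed.

Lemma imp_int_unique g (lo : R) (hi : Rbar) l1 l2 :
  is_imp_int g lo hi l1 -> is_imp_int g lo hi l2 -> l1 = l2.
Proof.
  intros H1 H2. destruct (Req_dec l1 l2) as [|Hn]; auto. exfalso.
  set (e := Rabs (l1 - l2) / 2).
  assert (He : 0 < e) by (apply Rdiv_lt_0_compat; [apply Rabs_pos_lt; lra | lra]).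
  destruct (H1 e He) as [a1 [b1 [Ha1 [Hb1 [Hab1 K1]]]]].
  destruct (H2 e He) as [a2 [b2 [Ha2 [Hb2 [Hab2 K2]]]]].
  set (a := Rmin a1 a2). set (b := Rmax b1 b2).
  assert (Ha : in_ivl lo hi a) by (apply in_ivl_min; auto).
  assert (Hb : in_ivl lo hi b) by (apply in_ivl_max; auto).
  pose proof (Rmin_l a1 a2); pose proof (Rmin_r a1 a2).
  pose proof (Rmax_l b1 b2); pose proof (Rmax_r b1 b2).
  assert (E1 : Rabs (RInt g a b - l1) < e) by (apply K1; try apply Hb; destruct Ha; unfold a, b in *; lra).
  assert (E2 : Rabs (RInt g a b - l2) < e) by (apply K2; try apply Hb; destruct Ha; unfold a, b in *; lra).
  apply Rabs_def2 in E1; apply Rabs_def2 in E2.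
  unfold e in *. destruct (Rcase_abs (l1 - l2));
    [rewrite Rabs_left in * | rewrite Rabs_pos_eq in *]; lra.
Qed.

Lemma imp_int_lincomb g h (lo : R) (hi : Rbar) l1 l2 c d :
  cont_on g lo hi -> cont_on h lo hi ->
  is_imp_int g lo hi l1 -> is_imp_int h lo hi l2 ->
  is_imp_int (fun x => c * g x + d * h x) lo hi (c * l1 + d * l2).
Proof.
  intros Hcg Hch Hg Hh eps Heps.
  pose proof (Rabs_pos c); pose proof (Rabs_pos d).
  set (e := eps / (1 + Rabs c + Rabs d)).
  assert (He : 0 < e) by (apply Rdiv_lt_0_compat; lra).
  assert (Heps_e : eps = e * (1 + Rabs c + Rabs d)) by (unfold e; field; lra).
  destruct (Hg e He) as [a1 [b1 [Ha1 [Hb1 [Hab1 H1]]]]].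
  destruct (Hh e He) as [a2 [b2 [Ha2 [Hb2 [Hab2 H2]]]]].
  pose proof (Rmin_l a1 a2); pose proof (Rmin_r a1 a2).
  pose proof (Rmax_l b1 b2); pose proof (Rmax_r b1 b2).
  assert (Ham := in_ivl_min lo hi a1 a2 Ha1 Ha2).
  assert (Hbm := in_ivl_max lo hi b1 b2 Hb1 Hb2).
  exists (Rmin a1 a2), (Rmax b1 b2). refine (conj Ham (conj Hbm (conj _ _))); [lra|].
  intros a b Ha Hb Hbh.
  assert (Ia : in_ivl lo hi a)
    by (split; [lra | apply Rbar_lt_le_trans with (Rmin a1 a2); [lra | apply Ham]]).
  assert (Ib : in_ivl lo hi b) by (split; auto; destruct Ia; lra).
  rewrite RInt_lincomb by (apply cont_on_ex_RInt with lo hi; auto).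
  assert (E1 : Rabs (RInt g a b - l1) < e) by (apply H1; auto; lra).
  assert (E2 : Rabs (RInt h a b - l2) < e) by (apply H2; auto; lra).
  replace (c * RInt g a b + d * RInt h a b - (c * l1 + d * l2))
    with (c * (RInt g a b - l1) + d * (RInt h a b - l2)) by ring.
  eapply Rle_lt_trans; [apply Rabs_triang|]. rewrite !Rabs_mult.
  pose proof (Rabs_pos (RInt g a b - l1)); pose proof (Rabs_pos (RInt h a b - l2)).
  rewrite Heps_e. nra.
Qed.

Definition lim_at_lo (F : R -> R) (lo : R) (hi : Rbar) (FL : R) : Prop :=
  forall eps, 0 < eps -> exists a0, in_ivl lo hi a0 /\
    forall a, lo < a <= a0 -> Rabs (F a - FL) < eps.
Definition lim_at_hi (F : R -> R) (lo : R) (hi : Rbar) (FH : R) : Prop :=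
  forall eps, 0 < eps -> exists b0, in_ivl lo hi b0 /\
    forall b, b0 <= b -> Rbar_lt b hi -> Rabs (F b - FH) < eps.

Lemma lim_at_lo_continuous (F : R -> R) (lo : R) (hi : Rbar) :
  Rbar_lt lo hi -> continuous F lo -> lim_at_lo F lo hi (F lo).
Proof.
  intros Hlh Hc eps He. apply continuity_pt_filterlim in Hc.
  destruct (Hc eps He) as [d [Hd H]].
  destruct (in_ivl_nonempty lo hi Hlh) as [x0 [Hx1 Hx2]].
  exists (Rmin x0 (lo + d / 2)). pose proof (Rmin_l x0 (lo + d / 2)); pose proof (Rmin_r x0 (lo + d / 2)).
  split.
  - split; [apply Rmin_glb_lt; lra | apply Rbar_lt_le_trans with x0; auto].
  - intros a Ha. apply H; split; [split; [exact I | lra] | change (Rabs (a - lo) < d); rewrite Rabs_pos_eq; lra].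
Qed.

Lemma imp_int_antiderivative g F (lo : R) (hi : Rbar) FL FH : cont_on g lo hi ->
  (forall x, in_ivl lo hi x -> is_derive F x (g x)) ->
  lim_at_lo F lo hi FL -> lim_at_hi F lo hi FH -> is_imp_int g lo hi (FH - FL).
Proof.
  intros Hc Hd HL HH eps Heps.
  destruct (HL (eps / 2)) as [a1 [Ha1 H1]]; [lra|].
  destruct (HH (eps / 2)) as [b0 [Hb0 H2]]; [lra|].
  pose proof (Rmin_l a1 b0); pose proof (Rmin_r a1 b0).
  assert (Ham := in_ivl_min lo hi a1 b0 Ha1 Hb0).
  exists (Rmin a1 b0), b0. refine (conj Ham (conj Hb0 (conj _ _))); [lra|].
  intros a b Ha Hb Hbh.
  assert (Ia : in_ivl lo hi a)
    by (split; [lra | apply Rbar_lt_le_trans with (Rmin a1 b0); [lra | apply Ham]]).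
  assert (Ib : in_ivl lo hi b) by (split; auto; destruct Ia; lra).
  rewrite (RInt_antiderivative g F a b) by
    (lra || (intros x Hx; first [apply Hd | apply Hc]; apply in_ivl_between with a b; auto)).
  assert (A1 : Rabs (F a - FL) < eps / 2) by (apply H1; lra).
  assert (A2 : Rabs (F b - FH) < eps / 2) by (apply H2; auto).
  apply Rabs_def2 in A1; apply Rabs_def2 in A2. apply Rabs_def1; lra.
Qed.

Lemma RInt_rescale (h : R -> R) lo L a b : 0 < L -> ex_RInt h ((a - lo) / L) ((b - lo) / L) ->
  RInt (fun t => h ((t - lo) / L)) a b = L * RInt h ((a - lo) / L) ((b - lo) / L).
Proof.
  intros HL Hex.
  assert (Hs : forall t, / L * t + - lo / L = (t - lo) / L) by (intros; field; lra).
  rewrite <- !Hs in Hex.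
  assert (E := RInt_comp_lin (V:=R_CompleteNormedModule) h (/ L) (- lo / L) a b Hex).
  simpl in E. rewrite !Hs in E. rewrite <- E.
  rewrite (RInt_ext (fun t => h ((t - lo) / L)) (fun t => L * scal (/ L) (h (/ L * t + - lo / L)))).
  - rewrite RInt_scale; [reflexivity|].
    apply (ex_RInt_comp_lin (V:=R_CompleteNormedModule)). exact Hex.
  - intros x _. rewrite Hs. change (h ((x - lo) / L) = L * (/ L * h ((x - lo) / L))).
    field. lra.
Qed.

Lemma in_unit_rescale lo L t : 0 < L ->
  in_ivl lo (Finite (lo + L)) t <-> in_ivl 0 (Finite 1) ((t - lo) / L).
Proof.
  intros HL. unfold in_ivl; simpl.
  split; intros [H1 H2]; split.
  - apply Rdiv_lt_0_compat; lra.
  - apply Rmult_lt_reg_r with L; auto. unfold Rdiv; rewrite Rmult_assoc, Rinv_l; lra.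
  - apply Rmult_lt_reg_r with (/ L); [apply Rinv_0_lt_compat; auto | lra].
  - apply Rmult_lt_reg_r with (/ L); [apply Rinv_0_lt_compat; auto|].
    replace ((lo + L) * / L) with (lo / L + 1) by (field; lra). unfold Rdiv in H2. lra.
Qed.

Lemma imp_int_rescale h l lo L : 0 < L -> cont_on h 0 (Finite 1) ->
  is_imp_int h 0 (Finite 1) l ->
  is_imp_int (fun t => h ((t - lo) / L)) lo (Finite (lo + L)) (L * l).
Proof.
  intros HL Hc Hl eps Heps.
  destruct (Hl (eps / L)) as [a0 [b0 [[Ha0 Ha0'] [[Hb0 Hb0'] [Hab H]]]]];
    [apply Rdiv_lt_0_compat; auto|]. simpl in Ha0', Hb0'.
  exists (lo + L * a0), (lo + L * b0).
  repeat split; simpl; try nra.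
  intros a b Ha Hb Hbh; simpl in Hbh.
  assert (Hs : forall t, (t - lo) / L * L = t - lo) by (intros; field; lra).
  rewrite RInt_rescale; auto.
  2: { apply cont_on_ex_RInt with 0 (Finite 1); auto; apply in_unit_rescale; auto;
       split; simpl; nra. }
  replace (L * RInt h ((a - lo) / L) ((b - lo) / L) - L * l)
    with (L * (RInt h ((a - lo) / L) ((b - lo) / L) - l)) by ring.
  rewrite Rabs_mult, (Rabs_pos_eq L) by lra.
  replace eps with (L * (eps / L)) by (field; lra).
  apply Rmult_lt_compat_l; auto. apply H.
  - pose proof (Hs a). split; [apply Rdiv_lt_0_compat; lra | nra].
  - pose proof (Hs b). nra.
  - simpl. pose proof (Hs b). nra.
Qed.

Lemma is_imp_int_improper_int g lo hi l :
  cont_on g lo (Finite hi) -> is_imp_int g lo (Finite hi) l -> improper_int g lo hi l.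
Proof.
  intros Hc Hl eps Heps. destruct (Hl eps Heps) as [a0 [b0 [[Ha1 Ha2] [[Hb1 Hb2] [Hab H]]]]].
  simpl in Ha2, Hb2.
  pose proof (Rmin_l (a0 - lo) (hi - b0)); pose proof (Rmin_r (a0 - lo) (hi - b0)).
  exists (Rmin (a0 - lo) (hi - b0)). split; [apply Rmin_glb_lt; lra|].
  intros a b Ha Hb.
  assert (Ia : in_ivl lo (Finite hi) a) by (split; simpl; lra).
  assert (Ib : in_ivl lo (Finite hi) b) by (split; simpl; lra).
  exists (ex_RInt_Reals_0 _ _ _ (cont_on_ex_RInt g lo (Finite hi) a b Hc Ia Ib)).
  rewrite <- RInt_Reals. apply H; simpl; lra.
Qed.

Lemma is_imp_int_improper_int_inf g lo l :
  cont_on g lo p_infty -> is_imp_int g lo p_infty l -> improper_int_inf g lo l.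
Proof.
  intros Hc Hl eps Heps. destruct (Hl eps Heps) as [a0 [b0 [[Ha1 _] [[Hb1 _] [Hab H]]]]].
  exists (a0 - lo). split; [lra|]. exists b0.
  intros a b Ha Hb.
  assert (Ia : in_ivl lo p_infty a) by (split; simpl; auto; lra).
  assert (Ib : in_ivl lo p_infty b) by (split; simpl; auto; lra).
  exists (ex_RInt_Reals_0 _ _ _ (cont_on_ex_RInt g lo p_infty a b Hc Ia Ib)).
  rewrite <- RInt_Reals. apply H; simpl; auto; lra.
Qed.

Lemma eq_of_close x y : (forall eps, 0 < eps -> Rabs (x - y) < eps) -> x = y.
Proof.
  intros H. destruct (Req_dec x y) as [|Hn]; auto. exfalso.
  assert (Hpos : 0 < Rabs (x - y)) by (apply Rabs_pos_lt; lra).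
  specialize (H _ Hpos). lra.
Qed.

Lemma improper_int_unique g lo hi l1 l2 :
  improper_int g lo hi l1 -> improper_int g lo hi l2 -> l1 = l2.
Proof.
  intros H1 H2. apply eq_of_close. intros eps Heps.
  destruct (H1 (eps / 2)) as [d1 [Hd1 K1]]; [lra|].
  destruct (H2 (eps / 2)) as [d2 [Hd2 K2]]; [lra|].
  set (m := Rmin d1 d2). assert (0 < m) by (apply Rmin_glb_lt; lra).
  pose proof (Rmin_l d1 d2); pose proof (Rmin_r d1 d2).
  destruct (K1 (lo + m / 2) (hi - m / 2)) as [p1 E1]; try (unfold m in *; lra).
  destruct (K2 (lo + m / 2) (hi - m / 2)) as [p2 E2]; try (unfold m in *; lra).
  rewrite (RiemannInt_P5 p1 p2) in E1.
  apply Rabs_def2 in E1; apply Rabs_def2 in E2. apply Rabs_def1; lra.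
Qed.

Lemma improper_int_inf_unique g lo l1 l2 :
  improper_int_inf g lo l1 -> improper_int_inf g lo l2 -> l1 = l2.
Proof.
  intros H1 H2. apply eq_of_close. intros eps Heps.
  destruct (H1 (eps / 2)) as [d1 [Hd1 [M1 K1]]]; [lra|].
  destruct (H2 (eps / 2)) as [d2 [Hd2 [M2 K2]]]; [lra|].
  set (m := Rmin d1 d2). assert (0 < m) by (apply Rmin_glb_lt; lra).
  pose proof (Rmin_l d1 d2); pose proof (Rmin_r d1 d2).
  pose proof (Rmax_l M1 M2); pose proof (Rmax_r M1 M2).
  destruct (K1 (lo + m / 2) (Rmax M1 M2 + 1)) as [p1 E1]; try (unfold m in *; lra).
  destruct (K2 (lo + m / 2) (Rmax M1 M2 + 1)) as [p2 E2]; try (unfold m in *; lra).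
  rewrite (RiemannInt_P5 p1 p2) in E1.
  apply Rabs_def2 in E1; apply Rabs_def2 in E2. apply Rabs_def1; lra.
Qed.

Lemma Rint_open_eq g lo hi l :
  cont_on g lo (Finite hi) -> is_imp_int g lo (Finite hi) l -> Rint_open g lo hi = l.
Proof.
  intros Hc Hl. assert (H := is_imp_int_improper_int g lo hi l Hc Hl).
  unfold Rint_open. apply (improper_int_unique g lo hi); auto.
  apply epsilon_spec. exists l; auto.
Qed.

Lemma exp_le x y : x <= y -> exp x <= exp y.
Proof. intros [H|H]; [left; apply exp_increasing; auto | right; subst; auto]. Qed.

Lemma exp_sub_ln A t : 0 < t -> exp (A - ln t) = exp A / t.
Proof. intros. unfold Rminus, Rdiv. rewrite exp_plus, exp_Ropp, exp_ln; auto. Qed.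

Lemma exp_add_ln A t : 0 < t -> exp (A + ln t) = exp A * t.
Proof. intros. rewrite exp_plus, exp_ln; auto. Qed.

Lemma ln_le_sub1 x : 0 < x -> ln x <= x - 1.
Proof. intros. pose proof (exp_ineq1_le (ln x)). rewrite exp_ln in H0; auto. lra. Qed.

Lemma ln_neg x : 0 < x < 1 -> ln x < 0.
Proof. intros. rewrite <- ln_1. apply ln_increasing; lra. Qed.

Lemma exp_lt_of_lt_ln y eps : 0 < eps -> y < ln eps -> exp y < eps.
Proof. intros. rewrite <- (exp_ln eps); auto. apply exp_increasing; auto. Qed.

Lemma pow_small_at_0 a : 0 < a -> forall eps, 0 < eps -> exists del, 0 < del /\
  forall t, 0 < t < del -> exp (a * ln t) < eps.
Proof.
  intros Ha eps He. exists (exp (ln eps / a)). split; [apply exp_pos|].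
  intros t [Ht1 Ht2]. apply exp_lt_of_lt_ln; auto.
  apply ln_increasing in Ht2; auto. rewrite ln_exp in Ht2.
  apply Rmult_lt_compat_l with (r := a) in Ht2; auto.
  replace (a * (ln eps / a)) with (ln eps) in Ht2 by (field; lra). lra.
Qed.

Lemma imp_int_of_dominated g h F (lo : R) (hi : Rbar) m M : Rbar_lt lo hi ->
  cont_on g lo hi -> nonneg_on g lo hi -> cont_on h lo hi ->
  (forall x, in_ivl lo hi x -> g x <= h x /\ is_derive F x (h x) /\ m <= F x <= M) ->
  exists l, is_imp_int g lo hi l.
Proof.
  intros Hlh Hcg Hpg Hch Hdom.
  apply imp_int_of_bounded with (M - m); auto.
  intros c d Hc Hd Hcd.
  assert (Hi : forall x, c <= x <= d -> in_ivl lo hi x)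
    by (intros; apply in_ivl_between with c d; auto).
  apply Rle_trans with (RInt h c d).
  - apply RInt_le; try (apply cont_on_ex_RInt with lo hi; auto).
    exact Hcd. intros x Hx. apply Hdom, Hi. lra.
  - rewrite (RInt_antiderivative h F c d Hcd) by (intros; first [apply Hdom | apply Hch]; auto).
    destruct (Hdom c Hc) as [_ [_ Hmc]]. destruct (Hdom d Hd) as [_ [_ HMd]]. lra.
Qed.

(** * The Gamma function *)

Definition gamma_kernel (a t : R) : R := exp ((a - 1) * ln t - t).

Lemma gamma_kernel_cont a : cont_on (gamma_kernel a) 0 p_infty.
Proof. intros x [Hx _]. unfold gamma_kernel. apply derivable_continuous. auto_derive. auto. Qed.

Lemma gamma_kernel_nonneg a : nonneg_on (gamma_kernel a) 0 p_infty.
Proof. intros x _. unfold gamma_kernel. left; apply exp_pos. Qed.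

(* [(a + 1) ln ((1 + x) / (a + 1)) <= x - a]: the Gamma kernel is
   dominated by a constant times [x ^ (a - 1) (1 + x) ^ (- a - 1)]. *)
Lemma ln_succ_bound a x : 0 < a -> 0 < x -> (a + 1) * (ln (1 + x) - ln (a + 1)) <= x - a.
Proof.
  intros Ha Hx. rewrite <- ln_div by lra.
  assert (Hl := ln_le_sub1 ((1 + x) / (a + 1)) ltac:(apply Rdiv_lt_0_compat; lra)).
  apply Rmult_le_compat_l with (r := a + 1) in Hl; [|lra].
  replace ((a + 1) * ((1 + x) / (a + 1) - 1)) with (x - a) in Hl by (field; lra). exact Hl.
Qed.

Lemma gamma_kernel_integrable a : 0 < a -> exists l, is_imp_int (gamma_kernel a) 0 p_infty l.
Proof.
  intros Ha.
  set (C := exp ((a + 1) * ln (a + 1))).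
  set (h := fun t => C * exp ((a - 1) * ln t - (a + 1) * ln (1 + t))).
  set (F := fun t => C / a * exp (a * ln t - a * ln (1 + t))).
  assert (HC : 0 < C / a) by (apply Rdiv_lt_0_compat; [apply exp_pos | auto]).
  apply imp_int_of_dominated with h F 0 (C / a); simpl; auto.
  - apply gamma_kernel_cont.
  - apply gamma_kernel_nonneg.
  - intros x [Hx _]. apply derivable_continuous. unfold h. auto_derive. lra.
  - intros x [Hx _]. split; [|split; [|split]].
    + unfold gamma_kernel, h, C. rewrite <- exp_plus. apply exp_le.
      pose proof (ln_succ_bound a x Ha Hx). lra.
    + unfold F, h. auto_derive; [lra|].
      replace ((a - 1) * ln x - (a + 1) * ln (1 + x))
        with (a * ln x - a * ln (1 + x) - ln x - ln (1 + x)) by ring.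
      rewrite !exp_sub_ln by lra. unfold Rminus. field. lra.
    + unfold F. left. apply Rmult_lt_0_compat; auto; apply exp_pos.
    + unfold F. rewrite <- (Rmult_1_r (C / a)) at 2. apply Rmult_le_compat_l; [lra|].
      rewrite <- exp_0 at 2. apply exp_le.
      assert (ln x < ln (1 + x)) by (apply ln_increasing; lra). nra.
Qed.

Lemma Gamma_fn_is_imp_int a : 0 < a -> is_imp_int (gamma_kernel a) 0 p_infty (Gamma_fn a).
Proof.
  intros Ha. destruct (gamma_kernel_integrable a Ha) as [l Hl].
  set (k := fun t => Rpower t (a - 1) * exp (- t)).
  assert (Hk : forall t, in_ivl 0 p_infty t -> gamma_kernel a t = k t).
  { intros t _. unfold gamma_kernel, k, Rpower. rewrite <- exp_plus. f_equal; ring. }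
  assert (Hl' : improper_int_inf k 0 l).
  { apply is_imp_int_improper_int_inf; [|apply imp_int_ext with (gamma_kernel a); auto].
    apply cont_on_ext with (gamma_kernel a); [exact Hk | apply gamma_kernel_cont]. }
  replace (Gamma_fn a) with l; auto.
  unfold Gamma_fn. apply (improper_int_inf_unique k 0); auto.
  apply epsilon_spec. exists l; auto.
Qed.

Lemma Gamma_fn_pos a : 0 < a -> 0 < Gamma_fn a.
Proof.
  intros Ha. apply Rlt_le_trans with (RInt (gamma_kernel a) 1 2).
  - apply RInt_gt_0; [lra | intros; apply exp_pos |].
    intros; apply gamma_kernel_cont; split; simpl; auto; lra.
  - apply imp_int_ge with 0 p_infty; auto using gamma_kernel_cont, gamma_kernel_nonneg,
      Gamma_fn_is_imp_int; try (split; simpl; auto; lra); lra.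
Qed.

Lemma Gamma_fn_1 : Gamma_fn 1 = 1.
Proof.
  assert (H : is_imp_int (gamma_kernel 1) 0 p_infty (0 - (- 1))).
  { apply imp_int_antiderivative with (F := fun t => - exp (- t)).
    - apply gamma_kernel_cont.
    - intros x [Hx _]. unfold gamma_kernel. auto_derive; auto.
      replace ((1 - 1) * ln x - x) with (- x) by ring. ring.
    - assert (HL := lim_at_lo_continuous (fun t => - exp (- t)) 0 p_infty I
        ltac:(apply derivable_continuous; auto_derive; auto)).
      simpl in HL. rewrite Ropp_0, exp_0 in HL. exact HL.
    - intros eps He. pose proof (Rmax_l 1 (1 - ln eps)); pose proof (Rmax_r 1 (1 - ln eps)).
      exists (Rmax 1 (1 - ln eps)). split; [split; simpl; auto; lra|].
      intros b Hb _. rewrite Rminus_0_r, Rabs_Ropp, Rabs_pos_eq by (left; apply exp_pos).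
      apply exp_lt_of_lt_ln; auto; lra. }
  pose proof (imp_int_unique _ _ _ _ _ (Gamma_fn_is_imp_int 1 Rlt_0_1) H). lra.
Qed.

(* [a ln t <= a ln (2 a) + t / 2 - a]: [t ^ a e ^ (- t)] vanishes at [+oo]. *)
Lemma ln_linear_bound a t : 0 < a -> 0 < t -> a * ln t <= a * ln (2 * a) + t / 2 - a.
Proof.
  intros Ha Ht.
  assert (E : ln t = ln (2 * a) + ln (t / (2 * a))).
  { rewrite <- ln_mult by (try apply Rdiv_lt_0_compat; lra). f_equal. field. lra. }
  assert (Hl := ln_le_sub1 (t / (2 * a)) ltac:(apply Rdiv_lt_0_compat; lra)).
  apply Rmult_le_compat_l with (r := a) in Hl; [|lra].
  replace (a * (t / (2 * a) - 1)) with (t / 2 - a) in Hl by (field; lra).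
  rewrite E. lra.
Qed.

(* Integration by parts: [Gamma (a + 1) = a Gamma a]. *)
Lemma Gamma_fn_succ a : 0 < a -> Gamma_fn (a + 1) = a * Gamma_fn a.
Proof.
  intros Ha.
  assert (H : is_imp_int (fun t => a * gamma_kernel a t + (-1) * gamma_kernel (a + 1) t)
                0 p_infty (0 - 0)).
  { apply imp_int_antiderivative with (F := fun t => exp (a * ln t - t)).
    - intros x [Hx _]. unfold gamma_kernel. apply derivable_continuous. auto_derive; auto.
    - intros x [Hx _]. unfold gamma_kernel. auto_derive; auto.
      replace ((a + 1 - 1) * ln x - x) with (a * ln x - x) by ring.
      replace ((a - 1) * ln x - x) with (a * ln x - x - ln x) by ring.
      rewrite exp_sub_ln by auto. unfold Rminus. field. lra.
    - intros eps He. destruct (pow_small_at_0 a Ha eps He) as [d [Hd K]].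
      exists (d / 2). split; [split; simpl; auto; lra|].
      intros t Ht. rewrite Rminus_0_r, Rabs_pos_eq by (left; apply exp_pos).
      apply Rle_lt_trans with (exp (a * ln t)); [apply exp_le; lra | apply K; lra].
    - intros eps He. set (c := a * ln (2 * a) - a).
      pose proof (Rmax_l 1 (2 * (c - ln eps) + 1)); pose proof (Rmax_r 1 (2 * (c - ln eps) + 1)).
      exists (Rmax 1 (2 * (c - ln eps) + 1)). split; [split; simpl; auto; lra|].
      intros b Hb _. rewrite Rminus_0_r, Rabs_pos_eq by (left; apply exp_pos).
      apply exp_lt_of_lt_ln; auto. pose proof (ln_linear_bound a b Ha ltac:(lra)).
      unfold c in *. lra. }
  assert (H2 := imp_int_lincomb _ _ 0 p_infty _ _ a (-1) (gamma_kernel_cont a)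
     (gamma_kernel_cont (a + 1)) (Gamma_fn_is_imp_int a Ha) (Gamma_fn_is_imp_int (a + 1) ltac:(lra))).
  pose proof (imp_int_unique _ _ _ _ _ H H2). lra.
Qed.

Lemma exp_convex la u v : 0 <= la <= 1 ->
  exp (la * u + (1 - la) * v) <= la * exp u + (1 - la) * exp v.
Proof.
  intros Hl. set (m := la * u + (1 - la) * v).
  assert (Eu : exp u = exp m * exp (u - m)) by (rewrite <- exp_plus; f_equal; ring).
  assert (Ev : exp v = exp m * exp (v - m)) by (rewrite <- exp_plus; f_equal; ring).
  pose proof (exp_ineq1_le (u - m)); pose proof (exp_ineq1_le (v - m)); pose proof (exp_pos m).
  assert (Hsum : la * (1 + (u - m)) + (1 - la) * (1 + (v - m)) = 1) by (unfold m; ring).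
  rewrite Eu, Ev.
  assert (exp m * 1 <= exp m * (la * exp (u - m) + (1 - la) * exp (v - m)))
    by (apply Rmult_le_compat_l; nra).
  nra.
Qed.

(* It
   follows from Young's inequality [exp_convex] applied pointwise to the
   normalised integrands [exp (A - ln GA)] and [exp (B - ln GB)]. *)
Lemma imp_int_holder (A B : R -> R) (lo : R) (hi : Rbar) la GA GB GC : 0 < la < 1 ->
  cont_on (fun t => exp (A t)) lo hi -> cont_on (fun t => exp (B t)) lo hi ->
  cont_on (fun t => exp (la * A t + (1 - la) * B t)) lo hi ->
  is_imp_int (fun t => exp (A t)) lo hi GA -> is_imp_int (fun t => exp (B t)) lo hi GB ->
  is_imp_int (fun t => exp (la * A t + (1 - la) * B t)) lo hi GC -> 0 < GA -> 0 < GB ->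
  GC <= exp (la * ln GA + (1 - la) * ln GB).
Proof.
  intros Hla HcA HcB HcC HA HB HC HGA HGB.
  set (K := exp (la * ln GA + (1 - la) * ln GB)).
  assert (HK : 0 < K) by apply exp_pos.
  assert (HPA : nonneg_on (fun t => exp (A t)) lo hi) by (intros x _; left; apply exp_pos).
  assert (HPB : nonneg_on (fun t => exp (B t)) lo hi) by (intros x _; left; apply exp_pos).
  apply imp_int_le with (1 := HC). intros c d Hc Hd Hcd.
  assert (IA := imp_int_ge _ _ _ _ _ _ HcA HPA HA Hc Hd Hcd).
  assert (IB := imp_int_ge _ _ _ _ _ _ HcB HPB HB Hc Hd Hcd).
  assert (XA := cont_on_ex_RInt _ _ _ _ _ HcA Hc Hd).
  assert (XB := cont_on_ex_RInt _ _ _ _ _ HcB Hc Hd).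
  apply Rle_trans with
    (RInt (fun t => (K * la / GA) * exp (A t) + (K * (1 - la) / GB) * exp (B t)) c d).
  - apply RInt_le; auto.
    + apply cont_on_ex_RInt with lo hi; auto.
    + apply ex_RInt_lincomb; auto.
    + intros x _.
      assert (E : exp (la * A x + (1 - la) * B x) =
                  K * exp (la * (A x - ln GA) + (1 - la) * (B x - ln GB))).
      { unfold K. rewrite <- exp_plus. f_equal. ring. }
      rewrite E.
      apply Rle_trans with (K * (la * exp (A x - ln GA) + (1 - la) * exp (B x - ln GB))).
      * apply Rmult_le_compat_l; [lra | apply exp_convex; lra].
      * rewrite !exp_sub_ln by auto. right. field. lra.
  - rewrite RInt_lincomb by auto.
    apply Rle_trans with (K * la / GA * GA + K * (1 - la) / GB * GB).
    + apply Rplus_le_compat; apply Rmult_le_compat_l; auto;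
        apply Rlt_le, Rdiv_lt_0_compat; nra.
    + right. field. lra.
Qed.

Definition log_convex (f : R -> R) : Prop :=
  forall x z la, 0 < x -> 0 < z -> 0 < la < 1 ->
    ln (f (la * x + (1 - la) * z)) <= la * ln (f x) + (1 - la) * ln (f z).

Lemma Gamma_fn_log_convex : log_convex Gamma_fn.
Proof.
  intros x z la Hx Hz Hla.
  assert (Hy : 0 < la * x + (1 - la) * z) by nra.
  set (A := fun t => (x - 1) * ln t - t). set (B := fun t => (z - 1) * ln t - t).
  assert (HC : cont_on (fun t => exp (la * A t + (1 - la) * B t)) 0 p_infty).
  { intros t [Ht _]. unfold A, B. apply derivable_continuous. auto_derive. auto. }
  assert (HL : is_imp_int (fun t => exp (la * A t + (1 - la) * B t)) 0 p_infty
                 (Gamma_fn (la * x + (1 - la) * z))).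
  { apply imp_int_ext with (2 := Gamma_fn_is_imp_int _ Hy).
    intros t _. unfold gamma_kernel, A, B. f_equal. ring. }
  assert (H := imp_int_holder A B 0 p_infty la _ _ _ Hla (gamma_kernel_cont x)
    (gamma_kernel_cont z) HC (Gamma_fn_is_imp_int x Hx) (Gamma_fn_is_imp_int z Hz) HL
    (Gamma_fn_pos x Hx) (Gamma_fn_pos z Hz)).
  apply ln_le in H; [rewrite ln_exp in H; exact H | apply Gamma_fn_pos; auto].
Qed.

(** * The Beta function *)

Definition beta_kernel (a b s : R) : R := exp ((a - 1) * ln s + (b - 1) * ln (1 - s)).

Lemma beta_kernel_cont a b : cont_on (beta_kernel a b) 0 (Finite 1).
Proof.
  intros x [Hx Hx']. simpl in Hx'. unfold beta_kernel.
  apply derivable_continuous. auto_derive. lra.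
Qed.

Lemma beta_kernel_nonneg a b : nonneg_on (beta_kernel a b) 0 (Finite 1).
Proof. intros x _. unfold beta_kernel. left; apply exp_pos. Qed.

Lemma beta_kernel_shift_l a b s : 0 < s -> beta_kernel (a + 1) b s = beta_kernel a b s * s.
Proof. intros. unfold beta_kernel. rewrite <- exp_add_ln by auto. f_equal. ring. Qed.

Lemma beta_kernel_shift_r a b s : s < 1 -> beta_kernel a (b + 1) s = beta_kernel a b s * (1 - s).
Proof. intros. unfold beta_kernel. rewrite <- exp_add_ln by lra. f_equal. ring. Qed.

(* On each half of [(0, 1)] one factor of the kernel stays between
   [2 ^ (- |c|)] and [2 ^ |c|]. *)
Lemma half_factor_bound c s : 1 / 2 <= s <= 1 -> c * ln s <= Rabs c * ln 2.
Proof.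
  intros Hs.
  assert (Hl2 : 0 < ln 2) by (rewrite <- ln_1; apply ln_increasing; lra).
  assert (Hlo : - ln 2 <= ln s).
  { replace (- ln 2) with (ln (/ 2)) by (rewrite ln_Rinv; lra). apply ln_le; lra. }
  assert (Hhi : ln s <= 0) by (rewrite <- ln_1; apply ln_le; lra).
  destruct (Rle_dec 0 c); [rewrite Rabs_pos_eq by auto | rewrite Rabs_left1 by lra]; nra.
Qed.

Lemma beta_kernel_bound a b s : 0 < s < 1 ->
  beta_kernel a b s <= exp ((Rabs (a - 1) + Rabs (b - 1)) * ln 2)
                       * (exp ((a - 1) * ln s) + exp ((b - 1) * ln (1 - s))).
Proof.
  intros Hs. unfold beta_kernel.
  assert (Hl2 : 0 < ln 2) by (rewrite <- ln_1; apply ln_increasing; lra).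
  pose proof (exp_pos ((a - 1) * ln s)); pose proof (exp_pos ((b - 1) * ln (1 - s))).
  pose proof (Rabs_pos (a - 1)); pose proof (Rabs_pos (b - 1)).
  rewrite Rmult_plus_distr_l, <- !exp_plus.
  destruct (Rle_dec s (1 / 2)).
  - pose proof (half_factor_bound (b - 1) (1 - s) ltac:(lra)).
    assert (exp ((a - 1) * ln s + (b - 1) * ln (1 - s))
            <= exp ((Rabs (a - 1) + Rabs (b - 1)) * ln 2 + (a - 1) * ln s))
      by (apply exp_le; nra).
    pose proof (exp_pos ((Rabs (a - 1) + Rabs (b - 1)) * ln 2 + (b - 1) * ln (1 - s))). lra.
  - pose proof (half_factor_bound (a - 1) s ltac:(lra)).
    assert (exp ((a - 1) * ln s + (b - 1) * ln (1 - s))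
            <= exp ((Rabs (a - 1) + Rabs (b - 1)) * ln 2 + (b - 1) * ln (1 - s)))
      by (apply exp_le; nra).
    pose proof (exp_pos ((Rabs (a - 1) + Rabs (b - 1)) * ln 2 + (a - 1) * ln s)). lra.
Qed.

Lemma beta_kernel_integrable a b : 0 < a -> 0 < b ->
  exists l, is_imp_int (beta_kernel a b) 0 (Finite 1) l.
Proof.
  intros Ha Hb.
  set (K := exp ((Rabs (a - 1) + Rabs (b - 1)) * ln 2)).
  set (h := fun s => K * (exp ((a - 1) * ln s) + exp ((b - 1) * ln (1 - s)))).
  set (F := fun s => K * (exp (a * ln s) / a - exp (b * ln (1 - s)) / b)).
  assert (HK : 0 < K) by apply exp_pos.
  apply imp_int_of_dominated with h F (- (K / b)) (K / a); simpl; auto using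
    beta_kernel_cont, beta_kernel_nonneg; [lra | |].
  - intros x [Hx Hx']; simpl in Hx'. unfold h. apply derivable_continuous. auto_derive. lra.
  - intros x [Hx Hx']; simpl in Hx'. split; [|split].
    + apply beta_kernel_bound; lra.
    + unfold F, h. auto_derive; [lra|].
      replace ((a - 1) * ln x) with (a * ln x - ln x) by ring.
      replace ((b - 1) * ln (1 - x)) with (b * ln (1 - x) - ln (1 - x)) by ring.
      rewrite !exp_sub_ln by lra. unfold Rminus. field. lra.
    + assert (Ea : exp (a * ln x) <= 1).
      { rewrite <- exp_0. apply exp_le. pose proof (ln_neg x ltac:(lra)). nra. }
      assert (Eb : exp (b * ln (1 - x)) <= 1).
      { apply Rle_trans with (exp 0); [apply exp_le | rewrite exp_0; lra].
        pose proof (ln_neg (1 - x) ltac:(lra)). nra. }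
      pose proof (exp_pos (a * ln x)); pose proof (exp_pos (b * ln (1 - x))).
      assert (0 <= exp (a * ln x) / a <= 1 / a)
        by (split; unfold Rdiv; apply Rmult_le_compat_r || apply Rmult_le_pos;
            try (left; apply Rinv_0_lt_compat); lra).
      assert (0 <= exp (b * ln (1 - x)) / b <= 1 / b)
        by (split; unfold Rdiv; apply Rmult_le_compat_r || apply Rmult_le_pos;
            try (left; apply Rinv_0_lt_compat); lra).
      unfold F. replace (K / a) with (K * (1 / a)) by (field; lra).
      replace (- (K / b)) with (K * (- (1 / b))) by (field; lra).
      split; apply Rmult_le_compat_l; lra.
Qed.

Definition Beta_fn (a b : R) : R :=
  epsilon (inhabits 0) (fun l => is_imp_int (beta_kernel a b) 0 (Finite 1) l).

Lemma Beta_fn_is_imp_int a b : 0 < a -> 0 < b ->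
  is_imp_int (beta_kernel a b) 0 (Finite 1) (Beta_fn a b).
Proof. intros. unfold Beta_fn. apply epsilon_spec. apply beta_kernel_integrable; auto. Qed.

Lemma Beta_fn_pos a b : 0 < a -> 0 < b -> 0 < Beta_fn a b.
Proof.
  intros Ha Hb. apply Rlt_le_trans with (RInt (beta_kernel a b) (1 / 4) (3 / 4)).
  - apply RInt_gt_0; [lra | intros; apply exp_pos |].
    intros; apply beta_kernel_cont; split; simpl; lra.
  - apply imp_int_ge with 0 (Finite 1); auto using beta_kernel_cont, beta_kernel_nonneg,
      Beta_fn_is_imp_int; try (split; simpl; lra); lra.
Qed.

Lemma pow_small_at_1 b : 0 < b -> forall eps, 0 < eps -> exists b0, in_ivl 0 (Finite 1) b0 /\
  forall s, b0 <= s -> Rbar_lt s (Finite 1) -> exp (b * ln (1 - s)) < eps.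
Proof.
  intros Hb eps He. destruct (pow_small_at_0 b Hb eps He) as [d [Hd K]].
  pose proof (Rmax_l (1 - d / 2) (1 / 2)); pose proof (Rmax_r (1 - d / 2) (1 / 2)).
  exists (Rmax (1 - d / 2) (1 / 2)).
  split; [split; simpl; [lra | unfold Rmax; destruct (Rle_dec (1 - d / 2) (1 / 2)); lra]|].
  intros s Hs Hs1; simpl in Hs1. apply K. lra.
Qed.

Lemma Beta_fn_1_l b : 0 < b -> Beta_fn 1 b = 1 / b.
Proof.
  intros Hb.
  set (F := fun s => - (exp (b * ln (1 - s)) / b)).
  assert (H : is_imp_int (beta_kernel 1 b) 0 (Finite 1) (0 - F 0)).
  { apply imp_int_antiderivative with (F := F).
    - apply beta_kernel_cont.
    - intros x [Hx Hx']; simpl in Hx'. unfold beta_kernel, F. auto_derive; [lra|].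
      replace ((1 - 1) * ln x + (b - 1) * ln (1 - x)) with (b * ln (1 - x) - ln (1 - x)) by ring.
      rewrite exp_sub_ln by lra. unfold Rminus. field. lra.
    - apply lim_at_lo_continuous; [simpl; lra|].
      apply derivable_continuous. unfold F. auto_derive. lra.
    - intros eps He. destruct (pow_small_at_1 b Hb (eps * b)) as [b0 [Hb0 K]]; [nra|].
      exists b0. split; auto. intros s Hs Hs1. specialize (K s Hs Hs1).
      unfold F. rewrite Rminus_0_r, Rabs_Ropp,
        Rabs_pos_eq by (apply Rlt_le, Rdiv_lt_0_compat; [apply exp_pos | lra]).
      apply Rmult_lt_reg_r with b; auto. unfold Rdiv; rewrite Rmult_assoc, Rinv_l; lra. }
  assert (E : 0 - F 0 = 1 / b).
  { unfold F. rewrite Rminus_0_r, ln_1, Rmult_0_r, exp_0. field. lra. }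
  rewrite <- E. apply (imp_int_unique (beta_kernel 1 b) 0 (Finite 1)); auto.
  apply Beta_fn_is_imp_int; lra.
Qed.

(* [B(a, b) = B(a + 1, b) + B(a, b + 1)], from [s + (1 - s) = 1]. *)
Lemma Beta_fn_split a b : 0 < a -> 0 < b ->
  Beta_fn a b = Beta_fn (a + 1) b + Beta_fn a (b + 1).
Proof.
  intros Ha Hb.
  assert (L := imp_int_lincomb _ _ 0 (Finite 1) _ _ 1 1 (beta_kernel_cont _ _)
    (beta_kernel_cont _ _) (Beta_fn_is_imp_int (a + 1) b ltac:(lra) Hb)
    (Beta_fn_is_imp_int a (b + 1) Ha ltac:(lra))).
  assert (L' : is_imp_int (beta_kernel a b) 0 (Finite 1)
                 (1 * Beta_fn (a + 1) b + 1 * Beta_fn a (b + 1))).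
  { apply imp_int_ext with (2 := L). intros x [Hx Hx']; simpl in Hx'.
    rewrite beta_kernel_shift_l, beta_kernel_shift_r by lra. ring. }
  rewrite (imp_int_unique _ _ _ _ _ (Beta_fn_is_imp_int a b Ha Hb) L'). ring.
Qed.

(* Integration by parts: [a B(a, b + 1) = b B(a + 1, b)], the boundary
   terms of [s ^ a (1 - s) ^ b] vanishing. *)
Lemma Beta_fn_parts a b : 0 < a -> 0 < b ->
  a * Beta_fn a (b + 1) = b * Beta_fn (a + 1) b.
Proof.
  intros Ha Hb.
  assert (L := imp_int_lincomb _ _ 0 (Finite 1) _ _ a (- b) (beta_kernel_cont _ _)
    (beta_kernel_cont _ _) (Beta_fn_is_imp_int a (b + 1) Ha ltac:(lra))
    (Beta_fn_is_imp_int (a + 1) b ltac:(lra) Hb)).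
  assert (L0 : is_imp_int (fun s => a * beta_kernel a (b + 1) s + - b * beta_kernel (a + 1) b s)
                 0 (Finite 1) (0 - 0)).
  { apply imp_int_antiderivative with (F := fun s => exp (a * ln s + b * ln (1 - s))).
    - intros x [Hx Hx']; simpl in Hx'. unfold beta_kernel.
      apply derivable_continuous. auto_derive; lra.
    - intros x [Hx Hx']; simpl in Hx'. unfold beta_kernel. auto_derive; [lra|].
      replace ((a - 1) * ln x + (b + 1 - 1) * ln (1 - x))
        with (a * ln x + b * ln (1 - x) - ln x) by ring.
      replace ((a + 1 - 1) * ln x + (b - 1) * ln (1 - x))
        with (a * ln x + b * ln (1 - x) - ln (1 - x)) by ring.
      rewrite !exp_sub_ln by lra. unfold Rminus. field. lra.
    - intros eps He. destruct (pow_small_at_0 a Ha eps He) as [d [Hd K]].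
      pose proof (Rmin_l (d / 2) (1 / 2)); pose proof (Rmin_r (d / 2) (1 / 2)).
      exists (Rmin (d / 2) (1 / 2)). split; [split; simpl; [apply Rmin_glb_lt |]; lra|].
      intros t Ht. rewrite Rminus_0_r, Rabs_pos_eq by (left; apply exp_pos).
      apply Rle_lt_trans with (exp (a * ln t)); [|apply K; lra].
      apply exp_le. pose proof (ln_neg (1 - t) ltac:(lra)). nra.
    - intros eps He. destruct (pow_small_at_1 b Hb eps He) as [b0 [Hb0 K]].
      exists b0. split; [exact Hb0|].
      intros s Hs Hs1. specialize (K s Hs Hs1). destruct Hb0 as [Hb01 _]. simpl in Hs1.
      rewrite Rminus_0_r, Rabs_pos_eq by (left; apply exp_pos).
      apply Rle_lt_trans with (exp (b * ln (1 - s))); auto.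
      apply exp_le. pose proof (ln_neg s ltac:(lra)). nra. }
  pose proof (imp_int_unique _ _ _ _ _ L0 L). lra.
Qed.

Lemma Beta_fn_succ a b : 0 < a -> 0 < b -> (a + b) * Beta_fn (a + 1) b = a * Beta_fn a b.
Proof.
  intros Ha Hb. rewrite (Beta_fn_split a b Ha Hb), Rmult_plus_distr_l, (Beta_fn_parts a b Ha Hb).
  ring.
Qed.

Lemma Beta_fn_log_convex b : 0 < b -> log_convex (fun a => Beta_fn a b).
Proof.
  intros Hb x z la Hx Hz Hla.
  assert (Hy : 0 < la * x + (1 - la) * z) by nra.
  set (A := fun t => (x - 1) * ln t + (b - 1) * ln (1 - t)).
  set (B := fun t => (z - 1) * ln t + (b - 1) * ln (1 - t)).
  assert (HC : cont_on (fun t => exp (la * A t + (1 - la) * B t)) 0 (Finite 1)).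
  { intros t [Ht Ht']; simpl in Ht'. unfold A, B. apply derivable_continuous. auto_derive. lra. }
  assert (HL : is_imp_int (fun t => exp (la * A t + (1 - la) * B t)) 0 (Finite 1)
                 (Beta_fn (la * x + (1 - la) * z) b)).
  { apply imp_int_ext with (2 := Beta_fn_is_imp_int _ b Hy Hb).
    intros t _. unfold beta_kernel, A, B. f_equal. ring. }
  assert (H := imp_int_holder A B 0 (Finite 1) la _ _ _ Hla (beta_kernel_cont x b)
    (beta_kernel_cont z b) HC (Beta_fn_is_imp_int x b Hx Hb) (Beta_fn_is_imp_int z b Hz Hb) HL
    (Beta_fn_pos x b Hx Hb) (Beta_fn_pos z b Hz Hb)).
  apply ln_le in H; [rewrite ln_exp in H; exact H | apply Beta_fn_pos; auto].
Qed.

(** * Bohr-Mollerup uniqueness *)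

(* Two positive log-convex solutions of [h (x + 1) = x h x] on [(0, +oo)]
   are proportional.  Their log-ratio [r] is 1-periodic, and log-convexity
   squeezes [ln h (n + x) - ln h n] between [x ln (n - 1)] and [x ln n], so
   [r x - r 1] is smaller than [ln (n / (n - 1))] for every integer [n]. *)
Section BohrMollerup.
Variables f g : R -> R.
Hypothesis f_pos : forall x, 0 < x -> 0 < f x.
Hypothesis g_pos : forall x, 0 < x -> 0 < g x.
Hypothesis f_succ : forall x, 0 < x -> f (x + 1) = x * f x.
Hypothesis g_succ : forall x, 0 < x -> g (x + 1) = x * g x.
Hypothesis f_log_convex : log_convex f.
Hypothesis g_log_convex : log_convex g.

Let r (y : R) : R := ln (f y) - ln (g y).

Lemma log_ratio_periodic y : 0 < y -> r (y + 1) = r y.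
Proof. intros Hy. unfold r. rewrite f_succ, g_succ, !ln_mult; auto; ring. Qed.

Lemma log_ratio_periodic_nat (k : nat) y : 0 < y -> r (y + INR k) = r y.
Proof.
  intros Hy. induction k as [|k IH]; [simpl; rewrite Rplus_0_r; auto|].
  rewrite S_INR. replace (y + (INR k + 1)) with ((y + INR k) + 1) by ring.
  rewrite log_ratio_periodic; auto. pose proof (pos_INR k); lra.
Qed.

Lemma log_convex_sandwich (h : R -> R) : (forall x, 0 < x -> 0 < h x) ->
  (forall x, 0 < x -> h (x + 1) = x * h x) -> log_convex h ->
  forall n x, 1 < n -> 0 < x < 1 ->
  ln (h n) + x * ln (n - 1) <= ln (h (n + x)) <= ln (h n) + x * ln n.
Proof.
  intros h_pos h_succ h_lc n x Hn Hx. split.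
  - (* [n] is a convex combination of [n - 1] and [n + x]. *)
    set (la := x / (1 + x)).
    assert (Hla : 0 < la < 1).
    { unfold la. split; [apply Rdiv_lt_0_compat; lra|].
      apply Rmult_lt_reg_r with (1 + x); [lra|]. unfold Rdiv; rewrite Rmult_assoc, Rinv_l; lra. }
    assert (L := h_lc (n - 1) (n + x) la ltac:(lra) ltac:(lra) Hla).
    replace (la * (n - 1) + (1 - la) * (n + x)) with n in L by (unfold la; field; lra).
    assert (E : ln (h n) = ln (n - 1) + ln (h (n - 1))).
    { replace n with ((n - 1) + 1) at 1 by ring. rewrite h_succ, ln_mult by (try apply h_pos; lra).
      reflexivity. }
    rewrite E in *.
    apply Rmult_le_reg_l with (1 - la); [lra|].
    replace ((1 - la) * (ln (n - 1) + ln (h (n - 1)) + x * ln (n - 1)))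
      with (ln (n - 1) + (1 - la) * ln (h (n - 1))) by (unfold la; field; lra).
    lra.
  - (* [n + x] is a convex combination of [n] and [n + 1]. *)
    assert (L := h_lc n (n + 1) (1 - x) ltac:(lra) ltac:(lra) ltac:(lra)).
    replace ((1 - x) * n + (1 - (1 - x)) * (n + 1)) with (n + x) in L by ring.
    rewrite h_succ, ln_mult in L by (try apply h_pos; lra). lra.
Qed.

Lemma log_ratio_unit_interval x : 0 < x < 1 -> r x = r 1.
Proof.
  intros Hx. apply eq_of_close. intros eps Heps.
  destruct (archimed_cor1 eps Heps) as [N [HN HN0]].
  assert (HNr : 0 < INR N) by (apply lt_0_INR; auto).
  set (n := INR N + 1). assert (Hn : 1 < n) by (unfold n; lra).
  assert (E1 : r (n + x) = r x).
  { replace (n + x) with (x + INR (S N)) by (rewrite S_INR; unfold n; ring).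
    apply log_ratio_periodic_nat; lra. }
  assert (E2 : r n = r 1).
  { replace n with (1 + INR N) by (unfold n; ring). apply log_ratio_periodic_nat; lra. }
  destruct (log_convex_sandwich f f_pos f_succ f_log_convex n x Hn Hx) as [F1 F2].
  destruct (log_convex_sandwich g g_pos g_succ g_log_convex n x Hn Hx) as [G1 G2].
  assert (Hgap : 0 <= ln n - ln (n - 1))
    by (pose proof (ln_increasing (n - 1) n ltac:(lra) ltac:(lra)); lra).
  assert (Hgap' : ln n - ln (n - 1) <= / INR N).
  { rewrite <- ln_div by lra. eapply Rle_trans; [apply ln_le_sub1; apply Rdiv_lt_0_compat; lra|].
    right. unfold n. field. lra. }
  assert (D : Rabs (r x - r 1) <= x * (ln n - ln (n - 1))).
  { rewrite <- E1, <- E2. unfold r. apply Rabs_le. split; nra. }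
  nra.
Qed.

Theorem Bohr_Mollerup x : 0 < x -> f x * g 1 = g x * f 1.
Proof.
  intros Hx.
  assert (Hr : forall N : nat, forall y, 0 < y <= INR N + 1 -> r y = r 1).
  { induction N as [|N IH]; intros y Hy.
    - simpl in Hy. destruct (Req_dec y 1) as [->|Hne]; [reflexivity|].
      apply log_ratio_unit_interval; lra.
    - rewrite S_INR in Hy. destruct (Rle_dec y (INR N + 1)); [apply IH; lra|].
      pose proof (pos_INR N).
      replace y with ((y - 1) + 1) by ring. rewrite log_ratio_periodic by lra. apply IH; lra. }
  destruct (INR_unbounded x) as [N HN].
  assert (H := Hr N x ltac:(lra)). unfold r in H.
  apply ln_inv; try (apply Rmult_lt_0_compat; first [apply f_pos | apply g_pos]; lra).
  rewrite !ln_mult by (first [apply f_pos | apply g_pos]; lra). lra.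
Qed.
End BohrMollerup.

(** * Beta-Gamma identity and convolution of Gamma densities *)

(* [x |-> B(x, b) Gamma (x + b)] satisfies the hypotheses of Bohr-Mollerup. *)
Theorem Beta_Gamma a b : 0 < a -> 0 < b ->
  Beta_fn a b * Gamma_fn (a + b) = Gamma_fn a * Gamma_fn b.
Proof.
  intros Ha Hb.
  set (f := fun x => Beta_fn x b * Gamma_fn (x + b)).
  assert (f_pos : forall x, 0 < x -> 0 < f x).
  { intros x Hx. apply Rmult_lt_0_compat; [apply Beta_fn_pos | apply Gamma_fn_pos]; lra. }
  assert (f_succ : forall x, 0 < x -> f (x + 1) = x * f x).
  { intros x Hx. unfold f. replace (x + 1 + b) with ((x + b) + 1) by ring.
    rewrite Gamma_fn_succ by lra.
    rewrite <- Rmult_assoc, (Rmult_comm (Beta_fn (x + 1) b)), Beta_fn_succ by auto. ring. }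
  assert (f_lc : log_convex f).
  { intros x z la Hx Hz Hla. unfold f.
    rewrite !ln_mult by (first [apply Beta_fn_pos | apply Gamma_fn_pos]; nra).
    assert (H1 := Beta_fn_log_convex b Hb x z la Hx Hz Hla).
    assert (H2 := Gamma_fn_log_convex (x + b) (z + b) la ltac:(lra) ltac:(lra) Hla).
    replace (la * (x + b) + (1 - la) * (z + b)) with (la * x + (1 - la) * z + b) in H2 by ring.
    simpl in H1. lra. }
  assert (H := Bohr_Mollerup f Gamma_fn f_pos Gamma_fn_pos f_succ Gamma_fn_succ f_lc
    Gamma_fn_log_convex a Ha).
  unfold f in H. rewrite Gamma_fn_1, Beta_fn_1_l, (Rplus_comm 1 b), Gamma_fn_succ, Rmult_1_r in H
    by auto.
  rewrite H. field. lra.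
Qed.

Lemma imp_int_scale g (lo : R) (hi : Rbar) l c : cont_on g lo hi ->
  is_imp_int g lo hi l -> is_imp_int (fun x => c * g x) lo hi (c * l).
Proof.
  intros Hc Hl. replace (c * l) with (c * l + 0 * l) by ring.
  apply imp_int_ext with (fun x => c * g x + 0 * g x); [intros; ring|].
  apply imp_int_lincomb; auto.
Qed.

Lemma gamma_conv_integrand beta a b Iv Iw U t : 0 < a -> 0 < b ->
  Iv < t -> t < U - Iw ->
  gamma_dens beta a Iv t * gamma_dens beta b Iw (U - t)
  = Rpower beta a / Gamma_fn a * (Rpower beta b / Gamma_fn b) * exp (- beta * (U - Iv - Iw))
    * Rpower (U - Iv - Iw) (a + b - 2) * beta_kernel a b ((t - Iv) / (U - Iv - Iw)).
Proof.
  intros Ha Hb Ht Ht'. set (L := U - Iv - Iw).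
  unfold gamma_dens, beta_kernel.
  destruct (Rlt_dec Iv t); [|lra]. destruct (Rlt_dec Iw (U - t)); [|lra].
  assert (E1 : ln ((t - Iv) / L) = ln (t - Iv) - ln L) by (apply ln_div; unfold L; lra).
  assert (E2 : ln (1 - (t - Iv) / L) = ln (U - t - Iw) - ln L).
  { rewrite <- ln_div by (unfold L; lra). f_equal. unfold L. field. lra. }
  rewrite E1, E2. unfold Rpower.
  replace (- beta * L) with (- beta * (t - Iv) + - beta * (U - t - Iw)) by (unfold L; ring).
  replace ((a + b - 2) * ln L) with ((a - 1) * ln L + (b - 1) * ln L) by ring.
  rewrite !exp_plus.
  replace ((a - 1) * (ln (t - Iv) - ln L)) with ((a - 1) * ln (t - Iv) + - ((a - 1) * ln L)) by ring.
  replace ((b - 1) * (ln (U - t - Iw) - ln L)) with ((b - 1) * ln (U - t - Iw) + - ((b - 1) * ln L))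
    by ring.
  rewrite !exp_plus, !exp_Ropp.
  pose proof (exp_pos ((a - 1) * ln L)); pose proof (exp_pos ((b - 1) * ln L)).
  pose proof (Gamma_fn_pos a Ha); pose proof (Gamma_fn_pos b Hb).
  field. repeat split; lra.
Qed.

Theorem gamma_dens_conv beta a b Iv Iw U : 0 < beta -> 0 < a -> 0 < b -> Iv + Iw < U ->
  Rint_open (fun t => gamma_dens beta a Iv t * gamma_dens beta b Iw (U - t)) Iv (U - Iw)
  = gamma_dens beta (a + b) (Iv + Iw) U.
Proof.
  intros Hbe Ha Hb HU.
  set (L := U - Iv - Iw). assert (HL : 0 < L) by (unfold L; lra).
  set (c := Rpower beta a / Gamma_fn a * (Rpower beta b / Gamma_fn b) * exp (- beta * L)
            * Rpower L (a + b - 2)).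
  set (k := fun t => beta_kernel a b ((t - Iv) / L)).
  assert (Hhi : U - Iw = Iv + L) by (unfold L; ring).
  assert (Hk : cont_on k Iv (Finite (U - Iw))).
  { intros t Ht. rewrite Hhi in Ht. apply in_unit_rescale in Ht; auto.
    destruct Ht as [Ht Ht']; simpl in Ht'. unfold k, beta_kernel.
    apply derivable_continuous. auto_derive. lra. }
  assert (Hint : forall t, in_ivl Iv (Finite (U - Iw)) t ->
            c * k t = gamma_dens beta a Iv t * gamma_dens beta b Iw (U - t)).
  { intros t [Ht Ht']; simpl in Ht'. rewrite gamma_conv_integrand by auto. reflexivity. }
  assert (Hlim : is_imp_int (fun t => c * k t) Iv (Finite (U - Iw)) (c * (L * Beta_fn a b))).
  { apply imp_int_scale; auto. rewrite Hhi.
    apply imp_int_rescale; auto using beta_kernel_cont, Beta_fn_is_imp_int. }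
  rewrite (Rint_open_eq _ Iv (U - Iw) (c * (L * Beta_fn a b))).
  2: { apply cont_on_ext with (fun t => c * k t); [exact Hint|].
       intros x Hx. apply (continuous_scal_r (V:=R_NormedModule) c k). apply Hk; auto. }
  2: { apply imp_int_ext with (2 := Hlim). auto. }
  assert (BG := Beta_Gamma a b Ha Hb).
  pose proof (Gamma_fn_pos a Ha); pose proof (Gamma_fn_pos b Hb).
  pose proof (Gamma_fn_pos (a + b) ltac:(lra)).
  replace (Beta_fn a b) with (Gamma_fn a * Gamma_fn b / Gamma_fn (a + b)) by (rewrite <- BG; field; lra).
  unfold gamma_dens. destruct (Rlt_dec (Iv + Iw) U); [|lra].
  replace (U - (Iv + Iw)) with L by (unfold L; ring).
  unfold c. replace (a + b - 1) with ((a + b - 2) + 1) by ring.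
  rewrite (Rpower_plus (a + b - 2) 1 L), Rpower_1, (Rpower_plus a b beta) by auto.
  field. repeat split; lra.
Qed.

(** * Reversibility of the factorised distribution *)

Lemma f_pair_gamma {T : Type} beta (I nu : T -> R) (i : T * T) U :
  0 < beta -> (forall x, 0 < nu x) ->
  f_pair beta I nu i U = gamma_dens beta (nu_pair nu i) (I_pair I i) U.
Proof.
  intros Hb Hnu. unfold f_pair, f_type, nu_pair, I_pair.
  destruct (Rlt_dec (I (fst i) + I (snd i)) U) as [HU|HU].
  - apply gamma_dens_conv; auto.
  - unfold gamma_dens. destruct (Rlt_dec (I (fst i) + I (snd i)) U); [contradiction | reflexivity].
Qed.

Lemma weighted_gamma_dens beta nu I0 c U : 0 < beta -> I0 < U ->
  c * exp (- beta * I0) * Rpower beta (- nu) * gamma_dens beta nu I0 U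
  = c * exp (- beta * U) * Rpower (U - I0) (nu - 1) / Gamma_fn nu.
Proof.
  intros Hb HU. unfold gamma_dens. destruct (Rlt_dec I0 U); [|lra].
  assert (X1 : exp (- beta * I0) * exp (- beta * (U - I0)) = exp (- beta * U))
    by (rewrite <- exp_plus; f_equal; ring).
  assert (X2 : Rpower beta (- nu) * Rpower beta nu = 1).
  { rewrite <- Rpower_plus. replace (- nu + nu) with 0 by ring. apply Rpower_O; auto. }
  rewrite <- X1. rewrite <- (Rmult_1_r c) at 2. rewrite <- X2. unfold Rdiv. ring.
Qed.

Lemma pi_w_pair {T : Type} beta (I nu p : T -> R) v w :
  pi_w beta I nu p v * pi_w beta I nu p w
  = p v * p w * exp (- beta * I_pair I (v, w)) * Rpower beta (- nu_pair nu (v, w)).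
Proof.
  unfold pi_w, I_pair, nu_pair; simpl.
  replace (- (nu v + nu w)) with (- nu v + - nu w) by ring.
  rewrite Rpower_plus.
  replace (exp (- beta * (I v + I w))) with (exp (- beta * I v) * exp (- beta * I w))
    by (rewrite <- exp_plus; f_equal; ring).
  ring.
Qed.

(* The algebraic core of both balance equations. *)
Lemma balance_identity c b c' b' e x y G :
  c * b = c' * b' -> c * e * x / G * (y * b) = c' * e * y / G * (x * b').
Proof.
  intros H. unfold Rdiv.
  replace (c * e * x * / G * (y * b)) with ((c * b) * e * x * y * / G) by ring.
  rewrite H. ring.
Qed.

Theorem theorem8
  (V : nat) (cls : Fin.t V -> nat)
  (I nu p : Fin.t V -> R) (beta : R)
  (bu : Fin.t V -> Fin.t V -> R)
  (bb : Fin.t V * Fin.t V -> Fin.t V * Fin.t V -> R)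
  (Hbeta : 0 < beta)
  (Hnu : forall v, 0 < nu v)
  (Hnu_cls : forall v w, cls v = cls w -> nu v = nu w)
  (Hp : forall v, 0 < p v)
  (Hbin : forall v w v' w',
      p v * p w * bb (v, w) (v', w') = p v' * p w' * bb (v', w') (v, w))
  (Hun_cls : forall v w, cls v <> cls w -> bu v w = 0)
  (Hun : forall v w, cls v = cls w -> p v * bu v w = p w * bu w v)
  (Hnu_bin : forall v w v' w', bb (v, w) (v', w') <> 0 ->
      nu v + nu w = nu v' + nu w') :
  (forall v w v' w' U, bb (v, w) (v', w') <> 0 ->
      Rmax (I_pair I (v, w)) (I_pair I (v', w')) < U ->
      pi_w beta I nu p v * pi_w beta I nu p w * f_pair beta I nu (v, w) U
        * a_bin I nu bb (v, w) (v', w') U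
      = pi_w beta I nu p v' * pi_w beta I nu p w' * f_pair beta I nu (v', w') U
        * a_bin I nu bb (v', w') (v, w) U)
  /\
  (forall v w U, cls v = cls w ->
      Rmax (I v) (I w) < U ->
      pi_w beta I nu p v * f_type beta I nu v U * a_un I nu bu v w U
      = pi_w beta I nu p w * f_type beta I nu w U * a_un I nu bu w v U).
Proof.
  split.
  - intros v w v' w' U Hbb HU.
    pose proof (Rmax_l (I_pair I (v, w)) (I_pair I (v', w'))).
    pose proof (Rmax_r (I_pair I (v, w)) (I_pair I (v', w'))).
    rewrite !pi_w_pair, !f_pair_gamma, !weighted_gamma_dens by (auto; lra).
    unfold a_bin. destruct (Rle_dec (I_pair I (v', w')) U); [|lra].
    destruct (Rle_dec (I_pair I (v, w)) U); [|lra].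
    replace (nu_pair nu (v', w')) with (nu_pair nu (v, w)) by (apply Hnu_bin; auto).
    apply balance_identity, Hbin.
  - intros v w U Hc HU.
    pose proof (Rmax_l (I v) (I w)). pose proof (Rmax_r (I v) (I w)).
    unfold pi_w, f_type. rewrite !weighted_gamma_dens by (auto; lra).
    unfold a_un. destruct (Rle_dec (I w) U); [|lra]. destruct (Rle_dec (I v) U); [|lra].
    rewrite (Hnu_cls v w Hc).
    apply balance_identity, Hun, Hc.
Qed.
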